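(* Let $n$ be a positive integer and $p$ an odd prime. Let $S \subseteq \mathbb{Z}_n$ with $0 \notin S$, $S = -S$, $|S| = p-1$, such that the circulant graph $\mathrm{Cay}(\mathbb{Z}_n, S)$ is connected. Then $\mathrm{Cay}(\mathbb{Z}_n, S)$ admits a perfect code if and only if $p$ divides $n$ and $s \not\equiv s' \pmod p$ for all distinct $s, s' \in S \cup \{0\}$.
   Context: $\mathbb{Z}_n$ is the additive group of integers modulo $n$; elements are identified with integers in $\{0,1,\dots,n-1\}$ when reducing modulo $p$. For an inverse-closed subset $S$ of $\mathbb{Z}_n$ not containing $0$, the circulant graph $\mathrm{Cay}(\mathbb{Z}_n,S)$ has vertex set $\mathbb{Z}_n$, with $u,v$ adjacent iff $v-u \in S$; its degree is $|S|$. A perfect code in a graph $\Gamma=(V,E)$ is a subset $C \subseteq V$ that is an independent set such that every vertex of $V\setminus C$ is adjacent to exactly one vertex of $C$ (equivalently, the closed neighbourhoods of vertices of $C$ partition $V$). *)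

(* Z_n is modelled by the ordinal type 'I_n (n > 0),
   with arithmetic modulo n performed on the underlying naturals. *)
From mathcomp Require Import all_boot.
Set Implicit Arguments. Unset Strict Implicit. Unset Printing Implicit Defensive.

Definition zdiff (n : nat) (v u : 'I_n) : nat := (v + (n - u)) %% n.

Definition connection_set (n : nat) (S : {set 'I_n}) : Prop :=
  (forall s, s \in S -> val s != 0) /\
  (forall s, s \in S -> exists2 t, t \in S & val t = (n - s) %% n).

Definition circ_adj (n : nat) (S : {set 'I_n}) : rel 'I_n :=
  fun u v => [exists s in S, val s == zdiff v u].

Definition circ_connected (n : nat) (S : {set 'I_n}) : Prop :=
  forall u v : 'I_n, connect (circ_adj S) u v.

Definition perfect_code (n : nat) (S : {set 'I_n}) (C : {set 'I_n}) : Prop :=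
  (forall c c', c \in C -> c' \in C -> ~~ circ_adj S c c') /\
  (forall v, v \notin C -> #|[set c in C | circ_adj S v c]| = 1).

(* A perfect code C of Cay(Z_n, S) is the same thing as a tiling T + C = Z_n by
   T = {0} u S.  Then |T| = p divides n, and T(w) C(w) = 0 for every n-th root of unity
   w <> 1, where X(w) is the sum of the w^x over x in X.  If p^a is the exact power of p
   dividing n, then p^a does not divide |C| = n/p, so C(w) cannot vanish at all the
   nontrivial p^a-th roots of unity: T(w) = 0 for some w of order p^(k+1).  The minimal
   polynomial of w is Phi_p(X^(p^k)), which forces the p elements of T to be multiples
   of p^k with distinct residues mod p^(k+1).  For k > 0 the multiples of p^k would be
   closed under adjacency, contradicting connectedness.  Conversely, when the elements of
   T are distinct mod p, the multiples of p are a perfect code. *)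

From mathcomp Require Import all_boot all_algebra.
From mathcomp Require Import algC cyclotomic.
Set Implicit Arguments.
Unset Strict Implicit.
Unset Printing Implicit Defensive.
Import GRing.Theory Num.Theory.
Local Open Scope ring_scope.

Lemma big_nat_mul_blocks (R : Type) (idx : R) (op : Monoid.law idx) a b (F : nat -> R) :
  \big[op/idx]_(0 <= j < a * b) F j =
  \big[op/idx]_(0 <= l < a) \big[op/idx]_(0 <= r < b) F (l * b + r)%N.
Proof.
rewrite big_nat_mul; apply: eq_bigr => l _.
rewrite mulSn addnC -{1}[(l * b)%N]add0n big_addn addKn.
by apply: eq_bigr => r _; rewrite addnC.
Qed.

Lemma sum_expr_root1_eq0 (R : idomainType) (u : R) n :
  u ^+ n = 1 -> u != 1 -> \sum_(i < n) u ^+ i = 0.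
Proof.
move=> un1 u_neq1; apply/eqP; have /eqP := subrX1 u n.
by rewrite un1 subrr eq_sym mulf_eq0 subr_eq0 (negbTE u_neq1).
Qed.

Lemma sum_prim_root_expr (R : idomainType) N (z : R) x :
  N.-primitive_root z ->
  \sum_(j < N) (z ^+ j) ^+ x = if (N %| x)%N then N%:R else 0.
Proof.
move=> prim_z; under eq_bigr do rewrite exprAC.
case: ifPn => [Nx | Nx].
  have /eqP -> : z ^+ x == 1 by rewrite -(prim_order_dvd prim_z).
  by rewrite (eq_bigr (fun _ => 1)) ?sumr_const ?card_ord // => j; rewrite expr1n.
apply: sum_expr_root1_eq0; first by rewrite exprAC (prim_expr_order prim_z) expr1n.
by rewrite -(prim_order_dvd prim_z).
Qed.

Lemma sum_periodic_root_eq0 (R : idomainType) (f : nat -> R) (w : R) a b :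
  (w ^+ b) ^+ a = 1 -> w ^+ b != 1 ->
  \sum_(0 <= j < a * b) f (j %% b)%N * w ^+ j = 0.
Proof.
move=> wb1 wb_neq1; rewrite big_nat_mul_blocks exchange_big /=.
apply: big1_seq => r; rewrite mem_index_iota => r_lt_b.
under eq_bigr do rewrite modnMDl modn_small // exprD mulrCA mulnC exprM.
by rewrite -mulr_suml big_mkord sum_expr_root1_eq0 ?mul0r.
Qed.

Lemma prim_root_pfactor_exists (R : idomainType) p a (w : R) :
  prime p -> w ^+ (p ^ a) = 1 -> w != 1 -> exists k, (p ^ k.+1).-primitive_root w.
Proof.
move=> pr_p wpa w_neq1; have pa_gt0 : (0 < p ^ a)%N by rewrite expn_gt0 prime_gt0.
have [m prim_w /(dvdn_pfactor _ _ pr_p) [[|k] _ m_eq]] := prim_order_exists pa_gt0 wpa.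
  move: prim_w w_neq1; rewrite m_eq expn0 => /prim_expr_order.
  by rewrite expr1 => ->; rewrite eqxx.
by exists k; rewrite -m_eq.
Qed.

Lemma prim_root_poly_eq0 (m : nat) (w : algC) (P : {poly rat}) :
  m.-primitive_root w -> (size P <= totient m)%N -> root (map_poly ratr P) w -> P = 0.
Proof.
move=> prim_w szP Pw; apply: contraTeq szP => P_neq0; rewrite -ltnNge.
have [Q [DQ _] dvdQ] := minCpolyP w.
have := dvdp_leq P_neq0 (_ : Q %| P); rewrite -dvdQ Pw => /(_ isT).
by rewrite -(size_map_poly (@ratr algC) Q) -DQ (minCpoly_cyclotomic prim_w) size_cyclotomic.
Qed.

Lemma coef_mod_prim_root_pfactor (p k : nat) (w : algC) (P : {poly rat}) :
  prime p -> (p ^ k.+1).-primitive_root w -> (size P <= p ^ k.+1)%N ->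
  root (map_poly ratr P) w ->
  forall j, (j < p ^ k.+1)%N -> P`_j = P`_(j %% p ^ k).
Proof.
move=> pr_p prim_w szP Pw; have p_gt0 := prime_gt0 pr_p.
set M := (p ^ k)%N; set q := (p.-1 * M)%N.
have M_gt0 : (0 < M)%N by rewrite expn_gt0 p_gt0.
have pM : (p ^ k.+1 = p * M)%N by rewrite expnS.
have qM : (p * M = q + M)%N by rewrite /q addnC -mulSn prednK.
have top j : (q <= j < q + M)%N -> (j %% M + q)%N = j.
  case/andP=> qj jqM; have jq_lt_M : (j - q < M)%N by rewrite ltn_subLR.
  by rewrite -{1}(subnKC qj) /q modnMDl modn_small // subnK.
have prim_wM : p.-primitive_root (w ^+ M).
  have p_dvd : (p %| p ^ k.+1)%N by rewrite pM dvdn_mulr.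
  by have := dvdn_prim_root prim_w p_dvd; rewrite pM mulKn.
have wM_neq1 : w ^+ M != 1.
  by rewrite -[w ^+ M]expr1 -(prim_order_dvd prim_wM) dvdn1 gtn_eqF ?prime_gt1.
have periodic0 : \sum_(0 <= j < p * M) ratr P`_(j %% M + q) * w ^+ j = 0.
  exact: (sum_periodic_root_eq0 (fun r => ratr P`_(r + q)) (prim_expr_order prim_wM) wM_neq1).
(* Subtracting [periodic0] folds the top block [q, q + M) of P onto the lower blocks,
   leaving a polynomial of size at most q = totient (p ^ k.+1) that vanishes at w. *)
pose E := \poly_(j < q) (P`_j - P`_(j %% M + q)).
have E0 : E = 0.
  apply: (prim_root_poly_eq0 prim_w); first by rewrite totient_pfactor // size_poly.
  rewrite /root (@horner_coef_wide _ q) ?size_map_poly ?size_poly //.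
  rewrite -(big_mkord xpredT (fun j => (map_poly ratr E)`_j * w ^+ j)).
  have -> : \sum_(0 <= j < q) (map_poly ratr E)`_j * w ^+ j =
            \sum_(0 <= j < p * M) (ratr P`_j - ratr P`_(j %% M + q)) * w ^+ j.
    rewrite qM (big_cat_nat (leq0n q) (leq_addr M q)) /= [X in _ + X]big_nat_cond.
    rewrite [X in _ + X]big1 => [|j /andP[/top -> _]]; last by rewrite subrr mul0r.
    rewrite addr0; apply: eq_big_nat => j /andP[_ jq].
    by rewrite coef_map coef_poly jq raddfB.
  under eq_bigr do rewrite mulrBl.
  rewrite sumrB periodic0 subr0 big_mkord -pM.
  under eq_bigr do rewrite -coef_map.
  by rewrite -horner_coef_wide ?size_map_poly.
have Pq j : (j < p * M)%N -> P`_j = P`_(j %% M + q).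
  case: (ltnP j q) => [jq _ | qj jpM]; last by rewrite top // qj -qM.
  have /eqP := congr1 (fun Q : {poly rat} => Q`_j) E0.
  by rewrite coef_poly jq coef0 subr_eq0 => /eqP.
move=> j; rewrite pM => jpM.
have jM_lt : (j %% M < p * M)%N := leq_trans (ltn_pmod j M_gt0) (leq_pmull M p_gt0).
by rewrite Pq // (Pq _ jM_lt) modn_mod.
Qed.

Lemma sum_expr_count_mod (R : nzSemiRingType) (I : finType) (T : {set I}) (f : I -> nat)
    (x : R) m :
  (0 < m)%N -> x ^+ m = 1 ->
  \sum_(t in T) x ^+ f t = \sum_(j < m) #|[set t in T | (f t %% m == j)%N]|%:R * x ^+ j.
Proof.
move=> m_gt0 xm1.
rewrite (partition_big (fun t => Ordinal (ltn_pmod (f t) m_gt0)) predT) //=.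
apply: eq_bigr => j _; rewrite mulr_natl -sumr_const.
apply: eq_big => [t | t /andP[_ /eqP <-]]; first by rewrite inE.
by rewrite expr_mod.
Qed.

Section ResidueCount.

Variables (n p k : nat) (T : {set 'I_n}) (w : algC).
Hypotheses (pr_p : prime p) (prim_w : (p ^ k.+1).-primitive_root w).
Hypothesis sumT0 : \sum_(t in T) w ^+ val t = 0.
Local Notation m := (p ^ k.+1)%N.
Local Notation c j := #|[set t in T | (val t %% m == j)%N]|.

Lemma count_mod_prim_root_pfactor j : (j < m)%N -> c j = c (j %% p ^ k)%N.
Proof.
move=> j_lt_m; have m_gt0 : (0 < m)%N by rewrite expn_gt0 prime_gt0.
pose P : {poly rat} := \poly_(i < m) (c i)%:R.
have Pw : root (map_poly ratr P) w.
  rewrite /root (@horner_coef_wide _ m) ?size_map_poly ?size_poly //.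
  under eq_bigr do rewrite coef_map coef_poly ltn_ord /= ratr_nat.
  by rewrite -sum_expr_count_mod ?sumT0 ?(prim_expr_order prim_w).
have := coef_mod_prim_root_pfactor pr_p prim_w (size_poly _ _) Pw j_lt_m.
have jM_lt_m : (j %% p ^ k < m)%N.
  by rewrite expnS (leq_trans (ltn_pmod _ _) (leq_pmull _ _)) ?expn_gt0 ?prime_gt0.
by rewrite !coef_poly j_lt_m jM_lt_m => /eqP; rewrite eqr_nat => /eqP.
Qed.

Hypotheses (cardT : #|T| = p) (T0 : exists2 t0, t0 \in T & val t0 = 0%N).

Lemma count_mod_small_pfactor r : (r < p ^ k)%N -> c r = (r == 0)%N.
Proof.
move=> r_lt_M; set M := (p ^ k)%N in r_lt_M *; have p_gt0 := prime_gt0 pr_p.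
have M_gt0 : (0 < M)%N by rewrite expn_gt0 p_gt0.
have m_gt0 : (0 < m)%N by rewrite expn_gt0 p_gt0.
have c_total : (\sum_(0 <= j < p * M) c j)%N = p.
  have := sum_expr_count_mod T (fun t : 'I_n => val t) m_gt0 (expr1n nat m).
  rewrite big_mkord -expnS; under eq_bigr do rewrite expr1n.
  by under [RHS]eq_bigr do rewrite expr1n mulr1 natn; rewrite sumr_const natn cardT.
have c_block : (\sum_(0 <= i < M) c i)%N = 1%N.
  apply/eqP; rewrite -(eqn_pmul2l p_gt0); apply/eqP.
  rewrite muln1 -[in RHS]c_total big_nat_mul_blocks.
  transitivity (\sum_(0 <= l < p) \sum_(0 <= i < M) c i)%N.
    by rewrite sum_nat_const_nat subn0.
  apply: eq_big_nat => l /andP[_ l_lt_p].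
  apply: eq_big_nat => i /andP[_ i_lt_M].
  rewrite [in RHS]count_mod_prim_root_pfactor ?modnMDl ?modn_small //.
  rewrite expnS -/M (leq_trans (_ : _ < l * M + M)%N) ?ltn_add2l //.
  by rewrite -mulSnr leq_mul2r l_lt_p orbT.
have [t0 t0T t00] := T0.
have c0 : c 0%N = 1%N.
  apply/anti_leq; rewrite -{1}c_block big_ltn // leq_addr card_gt0.
  by apply/set0Pn; exists t0; rewrite inE t0T t00 mod0n.
case: posnP => [-> // | r_gt0]; move: c_block; rewrite big_ltn // c0 => /eqP.
rewrite -{2}[1%N]addn0 eqn_add2l sum_nat_seq_eq0 => /allP/(_ r).
by rewrite mem_index_iota r_gt0 r_lt_M => /(_ isT)/eqP.
Qed.

Lemma vanishing_sum_pfactor_structure :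
  {in T, forall t, p ^ k %| val t}%N /\ {in T &, injective (fun t : 'I_n => val t %% m)%N}.
Proof.
have M_gt0 : (0 < p ^ k)%N by rewrite expn_gt0 prime_gt0.
have c_val t : c (val t %% m)%N = (p ^ k %| val t)%N.
  rewrite count_mod_prim_root_pfactor ?ltn_pmod ?expn_gt0 ?prime_gt0 //.
  by rewrite modn_dvdm ?dvdn_exp2l // count_mod_small_pfactor ?ltn_pmod.
have c_gt0 t : t \in T -> (0 < c (val t %% m))%N.
  by move=> tT; rewrite card_gt0; apply/set0Pn; exists t; rewrite inE tT eqxx.
have T_dvd t : t \in T -> (p ^ k %| val t)%N by move/c_gt0; rewrite c_val lt0b.
split=> // t t' tT t'T eq_mod.
have /cards1P [x fiber_x] : c (val t %% m)%N == 1%N by rewrite c_val T_dvd.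
have : (t \in [set x]) && (t' \in [set x]) by rewrite -fiber_x !inE tT t'T eq_mod eqxx.
by rewrite !inE => /andP[/eqP -> /eqP ->].
Qed.

End ResidueCount.

Section CirculantZn.

Variable n' : nat.
Local Notation n := n'.+1.
Implicit Types (S T A B C : {set 'I_n}) (g : 'I_n).

Definition tiling A B := forall g, #|[set x in setX A B | x.1 + x.2 == g]| = 1%N.

Lemma circ_adjE S x y : circ_adj S x y = (y - x \in S).
Proof.
rewrite /circ_adj; have -> : zdiff y x = val (y - x) by rewrite /zdiff /= modnDmr.
apply/existsP/idP => [[s /andP[sS /eqP/val_inj <-]] | yxS] //.
by exists (y - x); rewrite yxS /=.
Qed.

Lemma connection_set_oppr S : connection_set S -> {in S, forall s, - s \in S}.
Proof. by case=> _ Sinv s /Sinv[t tS tE]; rewrite (_ : - s = t) //; apply: val_inj. Qed.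

Lemma val_addE_mod d (x y : 'I_n) : (d %| n)%N -> val (x + y) = val x + val y %[mod d].
Proof. by move=> dvd_dn; rewrite /= modn_dvdm. Qed.

Lemma tiling_mul (R : comPzSemiRingType) (F : 'I_n -> R) A B :
  tiling A B -> {morph F : x y / x + y >-> x * y} ->
  (\sum_(a in A) F a) * (\sum_(b in B) F b) = \sum_g F g.
Proof.
move=> tileAB Fmorph; rewrite mulr_suml; under eq_bigr do rewrite mulr_sumr.
rewrite pair_big_dep (partition_big (fun x => x.1 + x.2) predT) //=.
apply: eq_bigr => g _; rewrite (eq_bigr (fun=> F g)) => [|x /andP[_ /eqP <-]]; last first.
  by rewrite Fmorph.
rewrite sumr_const (_ : #|_| = 1%N) // -(tileAB g); apply: eq_card => x.
by rewrite !inE.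
Qed.

Lemma tiling_card A B : tiling A B -> (#|A| * #|B|)%N = n.
Proof.
move=> tileAB; have := tiling_mul (F := fun=> 1%N) tileAB (fun _ _ => esym (muln1 1)).
by rewrite !sum_nat_const card_ord !muln1.
Qed.

Lemma perfect_code_tiling S C :
  connection_set S -> perfect_code S C -> tiling (0 |: S) C.
Proof.
move=> Sconn [Cind Cperf] g; apply/eqP/cards1P; case: (boolP (g \in C)) => gC.
  exists (0, g); apply/setP => -[t c]; rewrite !inE /=.
  apply/idP/eqP => [/andP[/andP[tT cC] /eqP tcg] | [-> ->]]; last by rewrite gC add0r !eqxx.
  case/orP: tT => [/eqP t0 | tS]; first by rewrite -tcg t0 add0r.
  by have := Cind c g cC gC; rewrite circ_adjE -tcg addrK tS.
have /eqP/cards1P [c0 adj_c0] := Cperf g gC.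
have /[!(inE, circ_adjE)] /andP[c0C c0gS] : c0 \in [set c in C | circ_adj S g c].
  by rewrite adj_c0 set11.
exists (g - c0, c0); apply/setP => -[t c]; rewrite !inE /=.
apply/idP/eqP => [/andP[/andP[tT cC] /eqP tcg] | [-> ->]]; last first.
  by rewrite subrK -opprB connection_set_oppr ?orbT // c0C eqxx.
have tS : t \in S by case/orP: tT => // /eqP t0; move: gC; rewrite -tcg t0 add0r cC.
have : c \in [set c in C | circ_adj S g c].
  by rewrite inE cC circ_adjE -tcg opprD addrCA subrr addr0 connection_set_oppr.
by rewrite adj_c0 inE => /eqP c_eq; rewrite -tcg c_eq addrK.
Qed.

Lemma tiling_perfect_code S C :
  connection_set S -> tiling (0 |: S) C -> perfect_code S C.
Proof.
move=> Sconn tileC; split=> [c c' cC c'C | v vC].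
  rewrite circ_adjE; apply/negP => c'cS.
  have /eqP/cards1P [x fiber_x] := tileC c'.
  have : (0, c') \in [set x] by rewrite -fiber_x !inE eqxx c'C add0r eqxx.
  have : (c' - c, c) \in [set x] by rewrite -fiber_x !inE c'cS orbT cC subrK eqxx.
  rewrite !inE => /eqP <- /eqP [c'c0 _].
  by have := Sconn.1 _ c'cS; rewrite /= -c'c0.
have /eqP/cards1P [[t0 c0] fiber_v] := tileC v.
have /[!inE] /andP[/andP[t0T c0C] /eqP t0c0] :
    (t0, c0) \in [set x in setX (0 |: S) C | x.1 + x.2 == v] by rewrite fiber_v set11.
have t0S : t0 \in S.
  by case/orP: t0T => // /eqP t00; move: vC; rewrite -t0c0 t00 add0r c0C.
apply/eqP/cards1P; exists c0; apply/setP => c; rewrite !inE circ_adjE.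
apply/andP/eqP => [[cC cvS] | ->].
  have : (v - c, c) \in [set (t0, c0)].
    by rewrite -fiber_v !inE subrK -opprB connection_set_oppr ?orbT // cC eqxx.
  by rewrite inE => /eqP [_].
by rewrite c0C -t0c0 opprD addrCA subrr addr0 connection_set_oppr.
Qed.

Lemma circ_connected_dvd S d :
  circ_connected S -> (d %| n)%N -> {in S, forall s, d %| val s}%N -> d = 1%N.
Proof.
move=> conn dvd_dn dvd_dS.
have closedS : closed (circ_adj S) [pred x : 'I_n | d %| val x]%N.
  move=> x y; rewrite circ_adjE => /dvd_dS /eqP yx_mod0.
  by rewrite !inE /dvdn -[y in RHS](subrK x) (val_addE_mod _ _ dvd_dn) -modnDml yx_mod0.
have := closed_connect closedS (conn 0 ord_max); rewrite !inE /= dvdn0 => /esym dvd_dn'.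
by move: dvd_dn; rewrite -addn1 dvdn_addr // dvdn1 => /eqP.
Qed.

Lemma tiling_residues A p :
  (0 < p)%N -> (p %| n)%N -> #|A| = p -> {in A &, injective (fun a : 'I_n => val a %% p)%N} ->
  tiling A [set c | p %| val c]%N.
Proof.
move=> p_gt0 dvd_pn cardA injA g.
pose r (x : 'I_n) : 'I_p := Ordinal (ltn_pmod (val x) p_gt0).
have rA : r @: A = setT.
  apply/eqP; rewrite eqEcard subsetT cardsT card_ord card_in_imset ?cardA ?leqnn //.
  by move=> x y xA yA /(congr1 val); apply: injA.
have /imsetP [a aA /(congr1 val) /= ga] : r g \in r @: A by rewrite rA inE.
apply/eqP/cards1P; exists (a, g - a); apply/setP => -[a' c]; rewrite !inE /=.
apply/idP/eqP => [/andP[/andP[a'A /eqP pc] /eqP a'cg] | [-> ->]].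
  have a'a : a' = a.
    apply: injA => //=; rewrite -ga -a'cg (val_addE_mod _ _ dvd_pn) -modnDmr.
    by rewrite pc addn0.
  by rewrite -a'cg a'a [a + c]addrC addrK.
rewrite aA subrKC eqxx andbT /dvdn.
have := val_addE_mod a (g - a) dvd_pn; rewrite subrKC ga -{1}[val a]addn0 => /eqP.
by rewrite eqn_modDl mod0n eq_sym.
Qed.

Lemma tiling_sum_root_eq0 A B N :
  tiling A B -> (N %| n)%N -> ~~ (N %| #|B|)%N ->
  exists w : algC, [/\ w ^+ N = 1, w != 1 & \sum_(a in A) w ^+ val a = 0].
Proof.
move=> tileAB dvd_Nn N_ndvd_B.
have N_gt0 : (0 < N)%N := dvdn_gt0 (ltn0Sn n') dvd_Nn.
have [z prim_z] := C_prim_root_exists N_gt0.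
have zn1 : z ^+ n = 1 by apply/eqP; rewrite -(prim_order_dvd prim_z).
have zjN1 (j : 'I_N) : (z ^+ j) ^+ N = 1 by rewrite exprAC (prim_expr_order prim_z) expr1n.
have zj_neq1 (j : 'I_N) : j != 0 :> nat -> z ^+ j != 1.
  by move=> j_neq0; rewrite -(prim_order_dvd prim_z) gtnNdvd ?lt0n.
have [/existsP[j /andP[j_neq0 /eqP sumA0]] | no_root] :=
  boolP [exists j : 'I_N, (j != 0 :> nat) && (\sum_(a in A) (z ^+ j) ^+ val a == 0)].
  by exists (z ^+ j); split; rewrite ?zjN1 ?zj_neq1.
(* Otherwise B(z^j) = 0 for 0 < j < N, and summing B(z^j) over all j < N counts, N times,
   the multiples of N in B. *)
case/negP: N_ndvd_B.
have sumB0 (j : 'I_N) : j != 0 :> nat -> \sum_(b in B) (z ^+ j) ^+ val b = 0.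
  move=> j_neq0; have wn1 : (z ^+ j) ^+ n = 1 by rewrite exprAC zn1 expr1n.
  have wmorph : {morph (fun x : 'I_n => (z ^+ j) ^+ val x) : x y / x + y >-> x * y}.
    by move=> x y; rewrite /= expr_mod // exprD.
  have := tiling_mul tileAB wmorph.
  rewrite (sum_expr_root1_eq0 wn1 (zj_neq1 j j_neq0)) => /eqP.
  rewrite (@mulf_eq0 algC) => /orP[sumA0 | /eqP //]; case/existsP: no_root.
  by exists j; rewrite j_neq0.
have : (#|B|%:R : algC) = (\sum_(b in B) (if N %| val b then N else 0))%:R.
  rewrite natr_sum; transitivity (\sum_(b in B) \sum_(j < N) (z ^+ j) ^+ val b); last first.
    by apply: eq_bigr => b _; rewrite (sum_prim_root_expr _ prim_z); case: ifP.
  rewrite exchange_big (bigD1 (Ordinal N_gt0)) //= [X in _ + X]big1 ?addr0; last first.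
    move=> j /negPf j_neq0.
    by apply: sumB0; rewrite -val_eqE /= in j_neq0; rewrite j_neq0.
  by under eq_bigr do rewrite expr0 expr1n; rewrite sumr_const.
by move/eqP; rewrite eqr_nat => /eqP ->; apply: dvdn_sum => b _; case: ifP.
Qed.

Lemma prime_tile_structure T C p :
  prime p -> #|T| = p -> 0 \in T -> tiling T C ->
  exists k, [/\ (p ^ k.+1 %| n)%N, {in T, forall t, p ^ k %| val t}%N
             & {in T &, injective (fun t : 'I_n => val t %% p ^ k.+1)%N}].
Proof.
move=> pr_p cardT T0 tileTC; set N := (p ^ logn p n)%N.
have dvd_Nn : (N %| n)%N by rewrite pfactor_dvdn.
have N_ndvd_C : ~~ (N %| #|C|)%N.
  rewrite -(dvdn_pmul2l (prime_gt0 pr_p)) -{2}cardT (tiling_card tileTC) -expnS.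
  by rewrite pfactor_dvdn // ltnn.
have [w [wN w_neq1 sumT0]] := tiling_sum_root_eq0 tileTC dvd_Nn N_ndvd_C.
have [k prim_w] := prim_root_pfactor_exists pr_p wN w_neq1.
have [|T_dvd T_inj] := vanishing_sum_pfactor_structure pr_p prim_w sumT0 cardT.
  by exists 0.
exists k; split=> //.
by apply: dvdn_trans dvd_Nn; rewrite (prim_order_dvd prim_w) wN.
Qed.

End CirculantZn.

Local Close Scope ring_scope.

Theorem theorem1p1 (n p : nat) (S : {set 'I_n}) :
  0 < n -> prime p -> odd p ->
  connection_set S -> #|S| = p.-1 -> circ_connected S ->
  (exists C : {set 'I_n}, perfect_code S C) <->
  (p %| n /\
   forall s s' : 'I_n, (val s == 0) || (s \in S) -> (val s' == 0) || (s' \in S) ->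
     s != s' -> val s %% p != val s' %% p).
Proof.
(* The argument works for every prime p. *)
move=> n_gt0 pr_p _ Sconn cardS conn.
case: n n_gt0 S Sconn cardS conn => // n' _ S Sconn cardS conn.
have S0 : 0%R \notin S by apply/negP => /Sconn.1/negP[].
have cardT : #|0%R |: S| = p by rewrite cardsU1 S0 cardS add1n prednK ?prime_gt0.
have memT s : ((val s == 0) || (s \in S)) = (s \in 0%R |: S) by rewrite !inE.
split=> [[C /(perfect_code_tiling Sconn) tileC] | [dvd_pn distinct]]; last first.
  exists [set c | p %| val c]; apply: tiling_perfect_code => //.
  apply: tiling_residues => // [|s s' sT s'T]; first exact: prime_gt0.
  by apply: contra_eq; apply: distinct; rewrite memT.
have [k [dvd_pk1_n T_dvd T_inj]] := prime_tile_structure pr_p cardT (setU11 _ _) tileC.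
have k0 : k = 0.
  have dvd_pk_n : p ^ k %| n'.+1 := dvdn_trans (dvdn_exp2l p (leqnSn k)) dvd_pk1_n.
  have := circ_connected_dvd conn dvd_pk_n (fun s sS => T_dvd s (setU1r _ sS)).
  by move/eqP; rewrite -(expn0 p) eqn_exp2l ?prime_gt1 // => /eqP.
rewrite k0 expn1 in dvd_pk1_n T_inj; split=> // s s' sT s'T.
by rewrite !memT in sT s'T; apply: contra_neq; apply: T_inj.
Qed.
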